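(* For $i,j\in J$ put $h_{ij}:=H(b_i\otimes b_j)=\min\{i,2-j\}$. The following nine vectors belong to $N$: $C_{b_0,b_0}=v_0\otimes v_0$, $C_{b_0,b_1}=v_0\otimes v_1+q^2v_1\otimes v_0$, $C_{b_0,b_2}=v_0\otimes v_2+q\,v_1\otimes v_1+q^4v_2\otimes v_0$, $C_{b_1,b_2}=v_1\otimes v_2+q^2v_2\otimes v_1$, $C_{b_2,b_2}=v_2\otimes v_2$, $C_{zb_2,b_1}=zv_2\otimes v_1+q^2v_1\otimes zv_2$, $C_{z^2b_2,b_0}=z^2v_2\otimes v_0+q\,zv_1\otimes zv_1+q^4v_0\otimes z^2v_2$, $C_{zb_1,b_0}=zv_1\otimes v_0+q^2v_0\otimes zv_1$, $C_{zb_1,b_1}=zv_1\otimes v_1+q^2v_1\otimes zv_1+q^2[2](v_0\otimes zv_2+zv_2\otimes v_0)$. These are exactly the elements $C_{z^{h_{ij}}b_i,b_j}$, one for each pair $(i,j)\in J\times J$. Moreover, for each $(i,j)$, letting $\mathcal B_{i,j}=\{(b,b')\in B_{\mathrm{aff}}\times B_{\mathrm{aff}}: H(b\otimes b')>0,\ l(b_j)\le l(b)<l(z^{h_{ij}}b_i),\ l(b_j)<l(b')\le l(z^{h_{ij}}b_i)\}$, the element $C_{z^{h_{ij}}b_i,b_j}$ has the form $G(z^{h_{ij}}b_i)\otimes G(b_j)-\sum_{(b,b')\in\mathcal B_{i,j}}a_{b,b'}\,G(b)\otimes G(b')$ with all coefficients $a_{b,b'}\in q\mathbb Z[q]$, and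 $H(z^{h_{ij}}b_i\otimes b_j)=0$.
   Context: Let $\mathfrak g=\widehat{\mathfrak{sl}}_2$, $I=\{0,1\}$, weight lattice $P=\mathbb Z\Lambda_0\oplus\mathbb Z\Lambda_1\oplus\mathbb Z\delta$, coroots $h_0,h_1$ with $\langle h_i,\Lambda_j\rangle=\delta_{ij}$, $\langle h_i,\delta\rangle=0$, central element $c=h_0+h_1$. $U_q(\mathfrak g)$ is the quantum affine algebra over $\mathbb Q(q)$ with generators $e_i,f_i$ ($i\in I$), $q^h$ ($h\in P^*$), $t_i=q^{h_i}$, and coproduct $\Delta(q^h)=q^h\otimes q^h$, $\Delta(e_i)=e_i\otimes1+t_i^{-1}\otimes e_i$, $\Delta(f_i)=f_i\otimes t_i+1\otimes f_i$. $[n]=(q^n-q^{-n})/(q-q^{-1})$. Let $J=\{0,1,2\}$. $V_{\mathrm{aff}}$ is the $\mathbb Q(q)$-space with basis $z^av_j$ ($a\in\mathbb Z$, $j\in J$), a $U_q(\mathfrak g)$-module via: $\mathrm{wt}(z^av_j)=2(1-j)(\Lambda_1-\Lambda_0)+a\delta$, $q^hz^av_j=q^{\langle h,\mathrm{wt}(z^av_j)\rangle}z^av_j$, $e_1z^av_j=[3-j]z^av_{j-1}$, $f_1z^av_j=[j+1]z^av_{j+1}$, $e_0z^av_j=[j+1]z^{a+1}v_{j+1}$, $f_0z^av_j=[3-j]z^{a-1}v_{j-1}$ (with $v_{-1}=v_3=0$). The operator $z^b$ sends $z^av_j\mapsto z^{a+b}v_j$. The crystal of $V_{\mathrm{aff}}$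 is $B_{\mathrm{aff}}=\{z^ab_j: a\in\mathbb Z, j\in J\}$ with lower global base $G(z^ab_j)=z^av_j$. Define $l(z^ab_j)=2a-j$ and the energy function $H(z^ab_i\otimes z^{a'}b_j)=\min\{i,2-j\}-a+a'$. $N\subset V_{\mathrm{aff}}\otimes V_{\mathrm{aff}}$ is the smallest subspace containing $v_0\otimes v_0$ that is stable under the action of $U_q(\mathfrak g)$ (via $\Delta$) and under the operators $z\otimes z$, $z^{-1}\otimes z^{-1}$, $z\otimes1+1\otimes z$. *)

From HB Require Import structures.
From mathcomp Require Import all_boot all_order all_algebra.
Set Implicit Arguments. Unset Strict Implicit. Unset Printing Implicit Defensive.
Import Order.TTheory GRing.Theory Num.Theory.
Local Open Scope ring_scope.

Definition K : fieldType := {fraction {poly rat}}.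
Definition q : K := FracField.tofrac ('X : {poly rat}).

Definition qint (n : int) : K := (q ^ n - q ^ (- n)) / (q - q^-1).

(* Crystal/basis of V_aff: (a, j) stands for z^a b_j, with G(z^a b_j) = z^a v_j. *)
Definition B := (int * 'I_3)%type.

(* weight of z^a v_j in coordinates w.r.t. (Lambda_0, Lambda_1, delta):
   2(1-j)(Lambda_1 - Lambda_0) + a delta *)
Definition wtp (b : B) : int * int * int :=
  let j := ((b.2 : nat) : int) in (- (2 * (1 - j)), 2 * (1 - j), b.1).

(* P^* = Z h_0 + Z h_1 + Z d, dual basis to (Lambda_0, Lambda_1, delta). *)
Definition pairing (h w : int * int * int) : int :=
  h.1.1 * w.1.1 + h.1.2 * w.1.2 + h.2 * w.2.

Definition hvec (i : 'I_2) : int * int * int :=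
  if (i : nat) == 0%N then (1, 0, 0) else (0, 1, 0).

(* An operator on V_aff sending each basis vector to a scalar multiple of a
   basis vector: b |-> (c, b') means b |-> c * b'. *)
Definition vop := B -> K * B.

Definition jup (j : 'I_3) : 'I_3 := inord j.+1.
Definition jdn (j : 'I_3) : 'I_3 := inord j.-1.

Definition vz (k : int) : vop := fun b => (1, (b.1 + k, b.2)).
Definition vid : vop := vz 0.
Definition vq (h : int * int * int) : vop := fun b => (q ^ pairing h (wtp b), b).
Definition vt (i : 'I_2) : vop := fun b => (q ^ pairing (hvec i) (wtp b), b).
Definition vtinv (i : 'I_2) : vop := fun b => (q ^ (- pairing (hvec i) (wtp b)), b).

(* e_1 z^a v_j = [3-j] z^a v_{j-1};  e_0 z^a v_j = [j+1] z^{a+1} v_{j+1} *)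
Definition ve (i : 'I_2) : vop := fun b =>
  let j := (b.2 : nat) in
  if (i : nat) == 0%N then
    (if j == 2%N then (0, b) else (qint (j.+1 : nat), (b.1 + 1, jup b.2)))
  else
    (if j == 0%N then (0, b) else (qint ((3 - j)%N : nat), (b.1, jdn b.2))).

(* f_1 z^a v_j = [j+1] z^a v_{j+1};  f_0 z^a v_j = [3-j] z^{a-1} v_{j-1} *)
Definition vf (i : 'I_2) : vop := fun b =>
  let j := (b.2 : nat) in
  if (i : nat) == 0%N then
    (if j == 0%N then (0, b) else (qint ((3 - j)%N : nat), (b.1 - 1, jdn b.2)))
  else
    (if j == 2%N then (0, b) else (qint (j.+1 : nat), (b.1, jup b.2))).

(* Elements of V_aff (x) V_aff as formal finite sums  sum c * (b (x) b'). *)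
Definition tens := seq (K * (B * B)).

Definition coef (s : tens) (p : B * B) : K :=
  \sum_(x <- s) (if x.2 == p then x.1 else 0).

Definition tscale (c : K) (s : tens) : tens := [seq (c * x.1, x.2) | x <- s].

Definition top (A C : vop) (s : tens) : tens :=
  [seq (x.1 * (A x.2.1).1 * (C x.2.2).1, ((A x.2.1).2, (C x.2.2).2)) | x <- s].

Definition Delta_e (i : 'I_2) (s : tens) : tens := top (ve i) vid s ++ top (vtinv i) (ve i) s.
Definition Delta_f (i : 'I_2) (s : tens) : tens := top (vf i) (vt i) s ++ top vid (vf i) s.
Definition Delta_q (h : int * int * int) (s : tens) : tens := top (vq h) (vq h) s.
Definition zz (s : tens) : tens := top (vz 1) (vz 1) s.
Definition zzinv (s : tens) : tens := top (vz (-1)) (vz (-1)) s.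
Definition zsum (s : tens) : tens := top (vz 1) vid s ++ top vid (vz 1) s.

Definition b00 : B * B := ((0, inord 0), (0, inord 0)).

(* Membership is up to equality of coefficients. *)
Inductive inN : tens -> Prop :=
| N_base : inN [:: (1, b00)]
| N_add s t : inN s -> inN t -> inN (s ++ t)
| N_scale c s : inN s -> inN (tscale c s)
| N_e i s : inN s -> inN (Delta_e i s)
| N_f i s : inN s -> inN (Delta_f i s)
| N_q h s : inN s -> inN (Delta_q h s)
| N_zz s : inN s -> inN (zz s)
| N_zzinv s : inN s -> inN (zzinv s)
| N_zsum s : inN s -> inN (zsum s)
| N_ext s t : inN s -> coef s =1 coef t -> inN t.

Definition Hen (b b' : B) : int := (minn b.2 (2 - b'.2) : nat)%:Z - b.1 + b'.1.

Definition lfun (b : B) : int := 2 * b.1 - ((b.2 : nat) : int).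

Definition hij (i j : 'I_3) : int := Hen (0, i) (0, j).

Definition lead (i j : 'I_3) : B * B := ((hij i j, i), (0, j)).

Definition inBij (i j : 'I_3) (p : B * B) : bool :=
  [&& 0 < Hen p.1 p.2,
      lfun (0, j) <= lfun p.1 < lfun (hij i j, i) &
      lfun (0, j) < lfun p.2 <= lfun (hij i j, i)].

Definition in_qZq (x : K) : Prop :=
  exists (n : nat) (c : nat -> int), x = \sum_(k < n) (c k)%:~R * q ^+ k.+1.

Definition mk (c : K) (a : int) (i : nat) (a' : int) (j : nat) : K * (B * B) :=
  (c, ((a, inord i), (a', inord j))).

Definition Cvec (i j : nat) : tens :=
  match i, j with
  | 0, 0 => [:: mk 1 0 0 0 0]
  | 0, 1 => [:: mk 1 0 0 0 1; mk (q ^+ 2) 0 1 0 0]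
  | 0, 2 => [:: mk 1 0 0 0 2; mk q 0 1 0 1; mk (q ^+ 4) 0 2 0 0]
  | 1, 2 => [:: mk 1 0 1 0 2; mk (q ^+ 2) 0 2 0 1]
  | 2, 2 => [:: mk 1 0 2 0 2]
  | 2, 1 => [:: mk 1 1 2 0 1; mk (q ^+ 2) 0 1 1 2]
  | 2, 0 => [:: mk 1 2 2 0 0; mk q 1 1 1 1; mk (q ^+ 4) 0 0 2 2]
  | 1, 0 => [:: mk 1 1 1 0 0; mk (q ^+ 2) 0 0 1 1]
  | 1, 1 => [:: mk 1 1 1 0 1; mk (q ^+ 2) 0 1 1 1;
               mk (q ^+ 2 * qint 2) 0 0 1 2; mk (q ^+ 2 * qint 2) 1 2 0 0]
  | _, _ => [::]
  end.

(* The nine vectors are produced from [v_0 (x) v_0] inside N: along the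
   [f_1]-string f_1 C00 = C01, f_1 C01 = [2] C02, f_1 C02 = [3] C12 and
   f_1 C12 = [4] C22; then C21 = e_0 C02 - (z(x)1 + 1(x)z) C12, C11 = e_1 C21,
   [2] C10 = e_1 C11 - [2] (z(x)1 + 1(x)z) C01 and [2] C20 = e_0 C10.
   Every vector has coefficient 1 at G(z^h_ij b_i) (x) G(b_j) and, at its other
   terms, all indexed by B_ij, one of q, q^2, q^4, q^2 [2] = q^3 + q, which lie
   in q Z[q]; H vanishes at the leading term because h_ij is H(b_i (x) b_j). *)

From HB Require Import structures.
From mathcomp Require Import all_boot all_order all_algebra.
From mathcomp Require Import ring.
Set Implicit Arguments.
Unset Strict Implicit.
Unset Printing Implicit Defensive.
Import Order.TTheory GRing.Theory Num.Theory.
Local Open Scope ring_scope.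

Lemma q_neq0 : q != 0.
Proof. by rewrite /q tofrac_eq0 polyX_eq0. Qed.

Lemma q_mulV : q * q^-1 = 1.
Proof. by rewrite mulfV // q_neq0. Qed.

Lemma qXn_sub1_neq0 n : q ^+ n.+1 - 1 != 0.
Proof.
rewrite /q -tofracXn -(tofrac1 {poly rat}) -tofracB tofrac_eq0.
by rewrite -size_poly_eq0 size_XnsubC.
Qed.

Lemma qdiff_neq0 : q - q^-1 != 0.
Proof.
have -> : q - q^-1 = (q ^+ 2 - 1) * q^-1 by ring: q_mulV.
by rewrite mulf_neq0 ?qXn_sub1_neq0 ?invr_eq0 ?q_neq0.
Qed.

Lemma qint_mul_diff (n : nat) : qint n * (q - q^-1) = q ^+ n - q^-1 ^+ n.
Proof. by rewrite /qint divfK ?qdiff_neq0 // -exprz_inv. Qed.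

Lemma qint_neq0 n : qint n.+1 != 0.
Proof.
apply/eqP => qint_eq0; move/eqP: (qXn_sub1_neq0 (n.+1 + n)); apply.
have <- : (q ^+ n.+1 - q^-1 ^+ n.+1) * q ^+ n.+1 = q ^+ (n.+1 + n).+1 - 1.
  by rewrite exprVn mulrBl mulVf ?expf_neq0 ?q_neq0 // -exprD addnS.
by rewrite -qint_mul_diff qint_eq0 !mul0r.
Qed.

Lemma qint_val (n : nat) x : x * (q - q^-1) = q ^+ n - q^-1 ^+ n -> qint n = x.
Proof. by rewrite -qint_mul_diff => /mulIf ->; rewrite ?qdiff_neq0. Qed.

Lemma qint1 : qint 1 = 1. Proof. by apply: qint_val; rewrite mul1r. Qed.
Lemma qint2 : qint 2 = q + q^-1. Proof. by apply: qint_val; ring: q_mulV. Qed.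
Lemma qint3 : qint 3 = q ^+ 2 + 1 + q^-1 ^+ 2. Proof. by apply: qint_val; ring: q_mulV. Qed.
Lemma qint4 : qint 4 = q ^+ 3 + q + q^-1 + q^-1 ^+ 3.
Proof. by apply: qint_val; ring: q_mulV. Qed.

Lemma coef_cons x s p : coef (x :: s) p = (if x.2 == p then x.1 else 0) + coef s p.
Proof. by rewrite /coef big_cons. Qed.

Lemma coef_tscale c s p : coef (tscale c s) p = c * coef s p.
Proof.
rewrite /coef /tscale big_map mulr_sumr; apply: eq_bigr => x _ /=.
by case: ifP; rewrite ?mulr0.
Qed.

Lemma coef_notin s p : p \notin [seq x.2 | x <- s] -> coef s p = 0.
Proof.
move=> p_notin; rewrite /coef big_seq big1 // => x xs.
by case: eqP => // px; case/negP: p_notin; apply/mapP; exists x.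
Qed.

Lemma eq_coef_on_keys s t :
  List.Forall (fun p => coef s p = coef t p) [seq x.2 | x <- s ++ t] ->
  coef s =1 coef t.
Proof.
move=> eq_st p; have [p_in|] := boolP (p \in [seq x.2 | x <- s ++ t]).
  elim: eq_st p_in => // k ks eq_k _ IH; rewrite inE => /predU1P[->|] //; exact: IH.
by rewrite map_cat mem_cat negb_or => /andP[ps pt]; rewrite !coef_notin.
Qed.

Lemma inN_unscale c s t : c != 0 -> inN s -> coef s =1 coef (tscale c t) -> inN t.
Proof.
move=> c_neq0 Ns eq_st; apply: (N_ext (N_scale c^-1 Ns)) => p.
by rewrite coef_tscale eq_st coef_tscale mulKf.
Qed.

Lemma in_qZq0 : in_qZq 0.
Proof. by exists 0%N, (fun=> 0); rewrite big_ord0. Qed.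

Lemma in_qZq_qexp n : in_qZq (q ^+ n.+1).
Proof.
exists n.+1, (fun k => (k == n)%:Z).
rewrite (bigD1 ord_max) //= eqxx mul1r big1 ?addr0 // => k /negbTE.
by rewrite -val_eqE /= => ->; rewrite mul0r.
Qed.

Lemma in_qZqN x : in_qZq x -> in_qZq (- x).
Proof.
move=> [n [c ->]]; exists n, (fun k => - c k).
by rewrite -sumrN; apply: eq_bigr => k _; rewrite intrN mulNr.
Qed.

Lemma in_qZqD x y : in_qZq x -> in_qZq y -> in_qZq (x + y).
Proof.
have widen m n (c : nat -> int) : (m <= n)%N ->
    \sum_(k < m) (c k)%:~R * q ^+ k.+1 =
    \sum_(k < n) (if (k < m)%N then c k else 0)%:~R * q ^+ k.+1.
  move=> le_mn; rewrite (big_ord_widen _ (fun k => (c k)%:~R * q ^+ k.+1) le_mn) big_mkcond.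
  by apply: eq_bigr => k _; case: ifP; rewrite ?mul0r.
move=> [m [c ->]] [n [d ->]].
exists (m + n)%N, (fun k => (if (k < m)%N then c k else 0) + (if (k < n)%N then d k else 0)).
rewrite (widen m (m + n)%N) ?leq_addr // (widen n (m + n)%N) ?leq_addl //.
by rewrite -big_split; apply: eq_bigr => k _; rewrite intrD mulrDl.
Qed.

Lemma coef_unitriangular (P : pred (B * B)) (l : B * B) (t : tens) :
  List.Forall (fun x => P x.2 /\ in_qZq x.1) t ->
  exists a : B * B -> K, (forall p, P p -> in_qZq (a p)) /\
    forall p, coef ((1, l) :: t) p = (p == l)%:R - (if P p then a p else 0).
Proof.
move=> tP; exists (fun p => - coef t p); split=> [p _ | p].
  apply: in_qZqN; elim: tP => [|x s [_ qZx] _ IH].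
    by rewrite /coef big_nil; exact: in_qZq0.
  by rewrite coef_cons; apply: in_qZqD => //; case: ifP => // _; exact: in_qZq0.
rewrite coef_cons /= eq_sym; case: (boolP (P p)) => Pp; first by rewrite opprK; case: eqP.
suff -> : coef t p = 0 by rewrite subr0 addr0; case: eqP.
elim: tP => [|x s [Px _] _ IH]; first by rewrite /coef big_nil.
by rewrite coef_cons IH addr0; case: eqP => // xp; rewrite xp (negbTE Pp) in Px.
Qed.

(* [inord] computes only through the opaque [idP], so before evaluating index
   comparisons the indices are rewritten to closed ordinals. *)
Definition ord3 (n : nat) : 'I_3 :=
  match n with 1 => Ordinal (isT : (1 < 3)%N) | 2 => Ordinal (isT : (2 < 3)%N) | _ => ord0 end.

Lemma inord3E n : inord n = ord3 n.
Proof. by apply: val_inj; rewrite /inord val_insubd; case: n => [|[|[|n]]]. Qed.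

Ltac eval_conditions :=
  repeat match goal with
  | |- context [if ?b then _ else _] =>
      let v := eval lazy in b in
      match v with true => change b with true | false => change b with false end;
      cbv beta iota zeta delta [fst snd]
  end.

Ltac eval_exponents :=
  repeat match goal with
  | |- context [qint ?n] =>
      let v := eval lazy in n in
      match v with Posz _ => idtac end; progress change n with v
  | |- context [q ^ ?n] =>
      let v := eval lazy in n in
      match v with
      | Posz ?m => change (q ^ n) with (q ^+ m)
      | Negz ?m => change (q ^ n) with ((q ^+ m.+1)^-1)
      end
  end; rewrite ?qint1 ?qint2 ?qint3 ?qint4 -?exprVn.

(* Equality of the coefficient functions of two concrete formal sums: compare
   them at each occurring key, deciding index comparisons by evaluation and the
   resulting identities in Q(q) by [ring]. *)
Ltac coef_eq_by_keys :=
  apply: eq_coef_on_keys;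
  cbv beta iota zeta delta [Delta_f Delta_e Delta_q zz zzinv zsum tscale top map cat
    ve vf vt vtinv vid vz vq fst snd mk Cvec b00 jup jdn]; rewrite ?inord3E;
  repeat match goal with |- List.Forall _ _ => constructor end;
  rewrite /coef ?big_cons ?big_nil; eval_conditions; eval_exponents; ring: q_mulV.

Lemma inN_C00 : inN (Cvec 0 0).
Proof. by apply: (N_ext N_base); coef_eq_by_keys. Qed.

Lemma inN_C01 : inN (Cvec 0 1).
Proof. by apply: (N_ext (N_f ord_max inN_C00)); coef_eq_by_keys. Qed.

Lemma inN_C02 : inN (Cvec 0 2).
Proof. by apply: (inN_unscale (qint_neq0 1) (N_f ord_max inN_C01)); coef_eq_by_keys. Qed.

Lemma inN_C12 : inN (Cvec 1 2).
Proof. by apply: (inN_unscale (qint_neq0 2) (N_f ord_max inN_C02)); coef_eq_by_keys. Qed.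

Lemma inN_C22 : inN (Cvec 2 2).
Proof. by apply: (inN_unscale (qint_neq0 3) (N_f ord_max inN_C12)); coef_eq_by_keys. Qed.

Lemma inN_C21 : inN (Cvec 2 1).
Proof.
apply: (N_ext (N_add (N_e ord0 inN_C02) (N_scale (-1) (N_zsum inN_C12)))).
by coef_eq_by_keys.
Qed.

Lemma inN_C11 : inN (Cvec 1 1).
Proof. by apply: (N_ext (N_e ord_max inN_C21)); coef_eq_by_keys. Qed.

Lemma inN_C10 : inN (Cvec 1 0).
Proof.
apply: (inN_unscale (qint_neq0 1)
  (N_add (N_e ord_max inN_C11) (N_scale (- qint 2) (N_zsum inN_C01)))).
by coef_eq_by_keys.
Qed.

Lemma inN_C20 : inN (Cvec 2 0).
Proof. by apply: (inN_unscale (qint_neq0 1) (N_e ord0 inN_C10)); coef_eq_by_keys. Qed.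

Lemma inN_Cvec (i j : 'I_3) : inN (Cvec i j).
Proof.
case: i j => [[|[|[|//]]] ?] [[|[|[|//]]] ?];
  by [exact: inN_C00 | exact: inN_C01 | exact: inN_C02 | exact: inN_C10 | exact: inN_C11
     | exact: inN_C12 | exact: inN_C20 | exact: inN_C21 | exact: inN_C22].
Qed.

Lemma lead_inord (i j : 'I_3) : lead i j = (((minn i (2 - j))%:Z, inord i), (0, inord j)).
Proof. by rewrite /lead /hij /Hen /= subr0 addr0 !inord_val. Qed.

Lemma Hen_lead (i j : 'I_3) : Hen (hij i j, i) (0, j) = 0.
Proof. by rewrite {1}/Hen /= addr0 /hij /Hen /= subr0 addr0 subrr. Qed.

Lemma in_qZq_qint2 : in_qZq (q ^+ 2 * qint 2).
Proof.
have -> : q ^+ 2 * qint 2 = q ^+ 3 + q ^+ 1 by rewrite qint2; ring: q_mulV.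
by apply: in_qZqD; apply: in_qZq_qexp.
Qed.

Lemma Cvec_decomposition (i j : 'I_3) :
  exists a : B * B -> K, (forall p, inBij i j p -> in_qZq (a p)) /\
    forall p, coef (Cvec i j) p = (p == lead i j)%:R - (if inBij i j p then a p else 0).
Proof.
rewrite lead_inord; case: i j => [[|[|[|//]]] ?] [[|[|[|//]]] ?];
  apply: coef_unitriangular; repeat match goal with |- List.Forall _ _ => constructor end;
  (split; [rewrite /mk /= !inord3E; exact: isT
          | first [exact: in_qZq_qexp | exact: (in_qZq_qexp 0) | exact: in_qZq_qint2]]).
Qed.

Theorem mainTheorem1 :
  forall i j : 'I_3,
    inN (Cvec i j) /\
    (exists a : B * B -> K,
        (forall p, inBij i j p -> in_qZq (a p)) /\
        (forall p, coef (Cvec i j) p =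
                   (p == lead i j)%:R - (if inBij i j p then a p else 0))) /\
    Hen (hij i j, i) (0, j) = 0.
Proof.
move=> i j; split; first exact: inN_Cvec.
by split; [exact: Cvec_decomposition | exact: Hen_lead].
Qed.
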